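(* The expected total number of queries to $\mathcal{O}_1$ and $\mathcal{O}_2$ performed by the modified multi-phase process described in the context is $O(n)$.
   Context: Let $n\ge2$ be an integer such that $m=n/\log_2 n$ is an integer, and let $S'$ be a set of $m$ distinct elements of a totally ordered set. For $\rho\in(0,1]$, $S^-_\rho$ denotes the set of the $\lceil \rho m\rceil$ smallest elements of $S'$ and $S^+_\rho=S'\setminus S^-_\rho$. There are two oracles $\mathcal{O}_1,\mathcal{O}_2$ which can be queried with an element $x\in S'$ and answer ''relevant'' or ''not relevant'' in constant time, all answers being mutually independent; for constants $p_1,p_2\in[0,\tfrac12)$: $\mathcal{O}_1$ reports $x$ relevant with probability at least $1-p_1$ if $x\in S^-_{1/6}$ and at most $p_1$ if $x\in S^+_{1/3}$; $\mathcal{O}_2$ reports $x$ relevant with probability at least $1-p_2$ if $x\in S^-_{1/3}$ and at most $p_2$ if $x\in S^+_{3/4}$. For $q\in[0,\tfrac12)$ let $c_q=\lceil 4(1-q)/(1-2q)^2\rceil$. Let $\eta = 1+\lceil \log_2 \frac{n}{\log_2 n}\rceil$. Modified multi-phase process: the elements of $S'$ are considered one at a time. For the current element $x$, a preliminary test is performed consisting of $8c_{p_1}\lceil \ln n\rceil+1$ queries to $\mathcal{O}_1$ on $x$; it is passed if the majority report $x$ relevant, otherwise $x$ is discarded and the next element is considered. Then, for $i=1,\dots,\eta$, the $i$-th test consists of $2\lceil 2^i\ln n\rceil c_{p_2}+1$ queries to $\mathcal{O}_2$ on $x$ and is passed if the majority report $x$ relevant; if $x$ fails a test it is discarded and the next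 element is considered. The process stops and returns the first element that passes the $\eta$-th test. Here $\ln$ is the natural logarithm; the $O(\cdot)$ constant depends only on $p_1,p_2$. *)

From HB Require Import structures.
From mathcomp Require Import all_boot all_order all_algebra.
From mathcomp Require Import reals exp.
Set Implicit Arguments. Unset Strict Implicit. Unset Printing Implicit Defensive.
Import Order.TTheory GRing.Theory Num.Theory.
Local Open Scope ring_scope.

(* ceiling as a natural number (used only on nonnegative arguments) *)
Definition ceiln (R : realType) (x : R) : nat := `|Num.ceil x|%N.

Definition log2 (R : realType) (x : R) : R := ln x / ln 2.

Definition cq (R : realType) (q : R) : nat :=
  ceiln (4 * (1 - q) / (1 - 2 * q) ^+ 2).

Definition prelim_size (R : realType) (p1 : R) (n : nat) : nat :=
  (8 * cq p1 * ceiln (ln (n%:R : R)) + 1)%N.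

Definition test_size (R : realType) (p2 : R) (n i : nat) : nat :=
  (2 * ceiln (2 ^+ i * ln (n%:R : R)) * cq p2 + 1)%N.

Definition eta (R : realType) (n : nat) : nat :=
  (1 + ceiln (log2 ((n%:R : R) / log2 (n%:R : R))))%N.

(* S' = {s j | j < m}, enumerated in the order in which the process considers
   its elements (s injective).  rank x = #{y in S' | y < x};
   x in S^-_rho  <->  rank x < ceil(rho m). *)
Definition rankS d (T : orderType d) m (s : 'I_m -> T) (x : T) : nat :=
  #|[pred j : 'I_m | (s j < x)%O]|.

Definition in_lower (R : realType) d (T : orderType d) m (s : 'I_m -> T)
  (rho : R) (x : T) : bool :=
  (rankS s x < ceiln (rho * m%:R))%N.

(* Oracle specification: q x is the probability that a query on x answers
   "relevant"; q x >= 1-p on S^-_{rlo}, q x <= p on S^+_{rhi} = S' \ S^-_{rhi}. *)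
Definition oracle_ok (R : realType) d (T : orderType d) m (s : 'I_m -> T)
  (q : T -> R) (p rlo rhi : R) : Prop :=
  forall j : 'I_m,
    (0 <= q (s j) <= 1) /\
    (in_lower s rlo (s j) -> 1 - p <= q (s j)) /\
    (~~ in_lower s rhi (s j) -> q (s j) <= p).

(* Random tape: for every element (position j < m), T0 independent answers of
   O1 (preliminary test) and, for each test i = 1..E, a block of K independent
   answers of O2, of which the first test_size(i) are used. *)
Definition tape (T0 E K : nat) : finType :=
  ({ffun 'I_T0 -> bool} * {ffun 'I_E -> {ffun 'I_K -> bool}})%type.
Definition Omega (m T0 E K : nat) : finType := {ffun 'I_m -> tape T0 E K}.

Definition bern (R : realType) (r : R) (b : bool) : R := if b then r else 1 - r.

Definition prob (R : realType) d (T : orderType d) m T0 E K (s : 'I_m -> T)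
  (q1 q2 : T -> R) (w : Omega m T0 E K) : R :=
  \prod_(j < m)
    ((\prod_(k < T0) bern (q1 (s j)) ((w j).1 k)) *
     (\prod_(i < E) \prod_(k < K) bern (q2 (s j)) ((w j).2 i k))).

Definition majority K (f : {ffun 'I_K -> bool}) (t : nat) : bool :=
  (t < 2 * \sum_(k < K | (k < t)%N) f k)%N.

(* tests 1..E (block i : 'I_E is test number i+1, of size t (i+1)):
   returns (queries used, all tests passed) *)
Definition run_tests E K (b : {ffun 'I_E -> {ffun 'I_K -> bool}})
  (t : nat -> nat) : nat * bool :=
  foldr (fun i acc =>
           if majority (b i) (t i.+1) then ((t i.+1 + acc.1)%N, acc.2)
           else (t i.+1, false))
        (0%N, true) (enum 'I_E).

Definition run_elem T0 E K (w : tape T0 E K) (t : nat -> nat) : nat * bool :=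
  if majority w.1 T0 then let r := run_tests w.2 t in ((T0 + r.1)%N, r.2)
  else (T0, false).

Definition total_queries m T0 E K (t : nat -> nat) (w : Omega m T0 E K) : nat :=
  foldr (fun j acc => let r := run_elem (w j) t in
                      (r.1 + (if r.2 then 0 else acc))%N)
        0%N (enum 'I_m).

Definition expected_queries (R : realType) (p1 p2 : R) (n : nat)
  d (T : orderType d) m (s : 'I_m -> T) (q1 q2 : T -> R) : R :=
  let T0 := prelim_size p1 n in
  let E := eta R n in
  let K := test_size p2 n E in
  \sum_(w : Omega m T0 E K)
     prob s q1 q2 w * (total_queries (test_size p2 n) w)%:R.

From Pilot Require Import Defs.
From HB Require Import structures.
From mathcomp Require Import all_boot all_order all_algebra.
From mathcomp Require Import reals exp sequences.
From mathcomp Require Import ring lra zify.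
Import Order.TTheory GRing.Theory Num.Theory.
Local Open Scope ring_scope.

(* Call the answers drawn for one element its tape, and call a tape bad when the
   element passes the preliminary test but then fails one of the [eta] tests.  If no
   tape is bad, every element either costs only its preliminary test or is returned,
   so the process asks at most [m T0 + sum_i t_i = O(n)] queries; in any case it asks
   at most [m (T0 + sum_i t_i) = O(n^2)].  Chernoff bounds for the majority votes,
   whose sizes are at least [4 c_p ln n], show that an element of [S^-_{1/3}] fails
   some [O2]-test, and any other element passes the [O1]-test, with probability at
   most [(eta + 1) n^-4]; a union bound over the [m] elements makes the quadratic
   term [O(1)]. *)

Section Ceiling.
Context {R : realType}.
Implicit Types x y : R.

Lemma ceilnE x : 0 <= x -> (ceiln x)%:R = (Num.ceil x)%:~R :> R.
Proof.
move=> x0; rewrite /ceiln natr_absz ger0_norm // ceil_ge0.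
by apply: lt_le_trans x0; rewrite ltrN10.
Qed.

Lemma ceiln_ge {x} : 0 <= x -> x <= (ceiln x)%:R.
Proof. by move=> x0; rewrite ceilnE // ceil_ge. Qed.

Lemma ceiln_lt {x} : 0 <= x -> (ceiln x)%:R < x + 1.
Proof. by move=> x0; rewrite ceilnE //; have := ceilB1_lt x; rewrite intrB; lra. Qed.

Lemma leq_ceiln x y : 0 <= x -> x <= y -> (ceiln x <= ceiln y)%N.
Proof.
move=> x0 xy; rewrite -(ler_nat R) !ceilnE //; last exact: le_trans xy.
by rewrite ler_int le_ceil.
Qed.

End Ceiling.

Section ProductSums.
Context {R : comNzRingType} {I J : finType}.
Implicit Types (F G : I -> J -> R).

Lemma sum_ffun_prodM F G :
  \sum_(f : {ffun I -> J}) (\prod_i F i (f i)) * (\prod_i G i (f i))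
  = \prod_i \sum_j F i j * G i j.
Proof.
rewrite (bigA_distr_bigA (fun i j => F i j * G i j)).
by apply: eq_bigr => f _; rewrite big_split.
Qed.

Lemma sum_ffun_prod1 F : (forall i, \sum_j F i j = 1) ->
  \sum_(f : {ffun I -> J}) \prod_i F i (f i) = 1.
Proof. by move=> F1; rewrite -bigA_distr_bigA big1. Qed.

Lemma sum_ffun_prod_marginal F (h : J -> R) (i0 : I) :
  (forall i, \sum_j F i j = 1) ->
  \sum_(f : {ffun I -> J}) (\prod_i F i (f i)) * h (f i0) = \sum_j F i0 j * h j.
Proof.
move=> F1; pose G i j := if i == i0 then h j else 1.
transitivity (\prod_i \sum_j F i j * G i j).
  rewrite -sum_ffun_prodM; apply: eq_bigr => f _; congr (_ * _).
  by rewrite (bigD1 i0) //= /G eqxx big1 ?mulr1 // => i /negbTE ->.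
rewrite (bigD1 i0) //= [X in _ * X]big1 ?mulr1 => [|i /negbTE i0i].
  by apply: eq_bigr => j _; rewrite /G eqxx.
by rewrite -(F1 i); apply: eq_bigr => j _; rewrite /G i0i mulr1.
Qed.

End ProductSums.

Section PairSums.
Context {R : comNzRingType} {A B : finType}.
Variables (P1 : A -> R) (P2 : B -> R).

Lemma sum_pair_marginal1 (h : A -> R) : \sum_b P2 b = 1 ->
  \sum_(x : A * B) P1 x.1 * P2 x.2 * h x.1 = \sum_a P1 a * h a.
Proof.
move=> P21; rewrite -(pair_bigA _ (fun a b => P1 a * P2 b * h a)) /=.
apply: eq_bigr => a _; rewrite -[RHS]mulr1 -P21 big_distrr /=.
by apply: eq_bigr => b _; ring.
Qed.

Lemma sum_pair_marginal2 (h : B -> R) : \sum_a P1 a = 1 ->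
  \sum_(x : A * B) P1 x.1 * P2 x.2 * h x.2 = \sum_b P2 b * h b.
Proof.
move=> P11; rewrite -(pair_bigA _ (fun a b => P1 a * P2 b * h b)) /= exchange_big /=.
apply: eq_bigr => b _; rewrite -[RHS]mul1r -P11 big_distrl /=.
by apply: eq_bigr => a _; ring.
Qed.

End PairSums.

Section TapeDistribution.
Context {R : realType}.
Implicit Types r : R.

Definition bern_prod r {K} (f : {ffun 'I_K -> bool}) : R := \prod_(k < K) bern r (f k).

Definition tape_prob r1 r2 {T0 E K} (x : tape T0 E K) : R :=
  bern_prod r1 x.1 * \prod_(i < E) bern_prod r2 (x.2 i).

Lemma bern_ge0 r b : 0 <= r <= 1 -> 0 <= bern r b.
Proof. by case: b => /andP[? ?] /=; lra. Qed.

Lemma sum_bern r : \sum_b bern r b = 1.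
Proof. by rewrite big_bool /=; ring. Qed.

Lemma bern_prod_ge0 r K (f : {ffun 'I_K -> bool}) : 0 <= r <= 1 -> 0 <= bern_prod r f.
Proof. by move=> r01; apply: prodr_ge0 => k _; apply: bern_ge0. Qed.

Lemma sum_bern_prod r K : \sum_(f : {ffun 'I_K -> bool}) bern_prod r f = 1.
Proof.
by rewrite /bern_prod; apply: (sum_ffun_prod1 (fun _ => bern r)) => k; apply: sum_bern.
Qed.

Lemma tape_prob_ge0 r1 r2 T0 E K (x : tape T0 E K) :
  0 <= r1 <= 1 -> 0 <= r2 <= 1 -> 0 <= tape_prob r1 r2 x.
Proof.
move=> r1_01 r2_01; apply: mulr_ge0; first exact: bern_prod_ge0.
by apply: prodr_ge0 => i _; apply: bern_prod_ge0.
Qed.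

Lemma sum_tests_prob r E K :
  \sum_(b : {ffun 'I_E -> {ffun 'I_K -> bool}}) \prod_(i < E) bern_prod r (b i) = 1.
Proof. by apply: (sum_ffun_prod1 (fun _ => @bern_prod r K)) => i; apply: sum_bern_prod. Qed.

Lemma sum_tape_prob_prelim r1 r2 T0 E K (h : {ffun 'I_T0 -> bool} -> R) :
  \sum_(x : tape T0 E K) tape_prob r1 r2 x * h x.1 = \sum_f bern_prod r1 f * h f.
Proof.
rewrite /tape_prob (sum_pair_marginal1 _ (fun b : {ffun 'I_E -> {ffun 'I_K -> bool}} =>
  \prod_(i < E) bern_prod r2 (b i))) //.
exact: sum_tests_prob.
Qed.

Lemma sum_tape_prob_test r1 r2 T0 E K (i : 'I_E) (h : {ffun 'I_K -> bool} -> R) :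
  \sum_(x : tape T0 E K) tape_prob r1 r2 x * h (x.2 i) = \sum_f bern_prod r2 f * h f.
Proof.
rewrite /tape_prob (sum_pair_marginal2 (bern_prod r1)
  (fun b : {ffun 'I_E -> {ffun 'I_K -> bool}} => \prod_(i < E) bern_prod r2 (b i))
  (fun b => h (b i))) ?sum_bern_prod //.
by apply: (sum_ffun_prod_marginal (fun _ => @bern_prod r2 K)) => j; apply: sum_bern_prod.
Qed.

Lemma sum_tape_prob r1 r2 T0 E K : \sum_(x : tape T0 E K) tape_prob r1 r2 x = 1.
Proof.
have := sum_tape_prob_prelim r1 r2 T0 E K (fun _ => 1).
by under eq_bigr do rewrite mulr1; under [RHS]eq_bigr do rewrite mulr1; rewrite sum_bern_prod.
Qed.

Variables (d : Order.disp_t) (T : orderType d) (m T0 E K : nat).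
Variables (s : 'I_m -> T) (q1 q2 : T -> R).

Lemma probE (w : Omega m T0 E K) :
  prob s q1 q2 w = \prod_(j < m) tape_prob (q1 (s j)) (q2 (s j)) (w j).
Proof. by []. Qed.

Lemma prob_ge0 (w : Omega m T0 E K) :
  (forall j, 0 <= q1 (s j) <= 1) -> (forall j, 0 <= q2 (s j) <= 1) ->
  0 <= prob s q1 q2 w.
Proof. by move=> q1_01 q2_01; apply: prodr_ge0 => j _; apply: tape_prob_ge0. Qed.

Lemma sum_prob : \sum_(w : Omega m T0 E K) prob s q1 q2 w = 1.
Proof.
under eq_bigr do rewrite probE.
apply: (sum_ffun_prod1 (fun j => tape_prob (q1 (s j)) (q2 (s j)))) => j.
exact: sum_tape_prob.
Qed.

Lemma sum_prob_marginal (j : 'I_m) (h : tape T0 E K -> R) :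
  \sum_(w : Omega m T0 E K) prob s q1 q2 w * h (w j)
  = \sum_x tape_prob (q1 (s j)) (q2 (s j)) x * h x.
Proof.
under eq_bigr do rewrite probE.
apply: (sum_ffun_prod_marginal (fun j => tape_prob (q1 (s j)) (q2 (s j)))) => i.
exact: sum_tape_prob.
Qed.

End TapeDistribution.

Section Chernoff.
Context {R : realType}.

Definition tilt (mu : R) (t : nat) {K} (f : {ffun 'I_K -> bool}) : R :=
  \prod_(k < K | (k < t)%N) (if f k then mu else mu^-1).

Lemma count_first_answers {K} (f : {ffun 'I_K -> bool}) t : (t <= K)%N ->
  (\sum_(k < K | (k < t)%N) f k + \sum_(k < K | (k < t)%N) ~~ f k)%N = t.
Proof.
move=> tK; rewrite -big_split /= (eq_bigr (fun=> 1%N)) => [|k _]; last by case: (f k).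
by rewrite -(big_ord_widen_cond _ xpredT (fun=> 1%N) tK) sum1_card card_ord.
Qed.

Lemma tiltE (mu : R) t K (f : {ffun 'I_K -> bool}) :
  tilt mu t f =
  mu ^+ (\sum_(k < K | (k < t)%N) f k) * mu^-1 ^+ (\sum_(k < K | (k < t)%N) ~~ f k).
Proof.
rewrite -!prodrXr -big_split /=; apply: eq_bigr => k _.
by case: (f k); rewrite /= ?expr1 ?expr0 ?mulr1 ?mul1r.
Qed.

Lemma tilt_ge0 (mu : R) t K (f : {ffun 'I_K -> bool}) : 0 < mu -> 0 <= tilt mu t f.
Proof.
move=> mu0; apply: prodr_ge0 => k _.
by case: (f k); apply: ltW; rewrite ?invr_gt0.
Qed.

Lemma mulr_exprV_ge1 (l : R) a b : 1 <= l -> (a <= b)%N -> 1 <= l ^+ b * l^-1 ^+ a.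
Proof.
move=> l1 ab; have l0 : l != 0 by rewrite gt_eqF // (lt_le_trans ltr01).
by rewrite -(subnK ab) exprD exprVn -mulrA mulfV ?mulr1 ?expf_neq0 ?exprn_ege1.
Qed.

Lemma tilt_majority (l : R) t K (f : {ffun 'I_K -> bool}) :
  1 <= l -> (t <= K)%N -> majority f t -> 1 <= tilt l t f.
Proof.
move=> l1 tK; rewrite /majority tiltE => maj; apply: mulr_exprV_ge1 => //.
by have := count_first_answers f t tK; lia.
Qed.

Lemma tilt_minority (l : R) t K (f : {ffun 'I_K -> bool}) :
  1 <= l -> (t <= K)%N -> ~~ majority f t -> 1 <= tilt l^-1 t f.
Proof.
move=> l1 tK; rewrite /majority -leqNgt tiltE invrK mulrC => min.
by apply: mulr_exprV_ge1 => //; have := count_first_answers f t tK; lia.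
Qed.

Lemma sum_bern_prod_tilt (r mu : R) t K : (t <= K)%N ->
  \sum_(f : {ffun 'I_K -> bool}) bern_prod r f * tilt mu t f
  = (r * mu + (1 - r) * mu^-1) ^+ t.
Proof.
move=> tK; pose g (k : 'I_K) b := if (k < t)%N then (if b then mu else mu^-1) else 1.
under eq_bigr do rewrite /tilt big_mkcond /=.
rewrite (sum_ffun_prodM (fun _ => bern r) g).
rewrite (eq_bigr (fun k : 'I_K => if (k < t)%N then r * mu + (1 - r) * mu^-1 else 1)).
  by rewrite -big_mkcond -(big_ord_widen_cond _ xpredT (fun=> r * mu + (1 - r) * mu^-1) tK)
    prodr_const card_ord.
by move=> k _; rewrite big_bool /g; case: (k < t)%N => /=; ring.
Qed.

Lemma bern_prod_tail {r mu : R} {t K} (P : pred {ffun 'I_K -> bool}) :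
  0 <= r <= 1 -> 0 < mu -> (t <= K)%N ->
  (forall f : {ffun 'I_K -> bool}, P f -> 1 <= tilt mu t f) ->
  \sum_(f : {ffun 'I_K -> bool}) bern_prod r f * (P f)%:R
  <= (r * mu + (1 - r) * mu^-1) ^+ t.
Proof.
move=> r01 mu0 tK Ptilt; rewrite -(sum_bern_prod_tilt r mu t K tK).
apply: ler_sum => f _; apply: ler_wpM2l; first exact: bern_prod_ge0.
by case: (boolP (P f)) => [/Ptilt|_]; last exact: tilt_ge0.
Qed.

Lemma pow_le_expR (v x : R) t : 0 <= v <= 1 - x / 2 ->
  v ^+ t <= expR (- (t%:R * x / 2)).
Proof.
move=> /andP[v0 vx]; have x2 : 0 <= 1 - x / 2 by exact: le_trans vx.
apply: le_trans (_ : (1 - x / 2) ^+ t <= _); first by rewrite lerXn2r.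
have -> : - (t%:R * x / 2) = t%:R * - (x / 2) by ring.
rewrite expRM_natl lerXn2r ?nnegrE ?expR_ge0 //.
exact: expR_ge1Dx.
Qed.

(* The tilt [2 (1 - p)] (instead of the optimal [sqrt ((1 - p) / p)]) gives a closed form. *)
Lemma tilt_moment_le (p r : R) : 0 <= r <= p -> p < 1 / 2 ->
  0 <= r * (2 * (1 - p)) + (1 - r) * (2 * (1 - p))^-1 <= 1 - (1 - 2 * p) ^+ 2 / 2.
Proof.
move=> /andP[r0 rp] p_lt; set l := 2 * (1 - p).
have l_ge1 : 1 <= l by rewrite /l; lra.
have linv_gt0 : 0 < l^-1 by rewrite invr_gt0; lra.
have linv_le1 : l^-1 <= 1 by rewrite invr_le1 ?unitf_gt0 //; lra.
have -> : 1 - (1 - 2 * p) ^+ 2 / 2 = p * l + (1 - p) * l^-1 by rewrite /l; field; lra.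
apply/andP; split; first by apply: addr_ge0; apply: mulr_ge0; lra.
suff : 0 <= (p - r) * (l - l^-1) by lra.
by apply: mulr_ge0; lra.
Qed.

Lemma majority_tail (p r : R) t K : 0 <= r <= p -> p < 1 / 2 -> (t <= K)%N ->
  \sum_(f : {ffun 'I_K -> bool}) bern_prod r f * (majority f t)%:R
  <= expR (- (t%:R * (1 - 2 * p) ^+ 2 / 2)).
Proof.
move=> rp p_lt tK; have r01 : 0 <= r <= 1 by case/andP: rp => ? ?; apply/andP; split; lra.
have l_gt0 : 0 < 2 * (1 - p) by lra.
apply: le_trans (bern_prod_tail (fun f => majority f t) r01 l_gt0 tK _) _.
  by move=> f; apply: tilt_majority => //; lra.
exact/pow_le_expR/tilt_moment_le.
Qed.

Lemma minority_tail (p r : R) t K : 1 - p <= r <= 1 -> p < 1 / 2 -> (t <= K)%N ->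
  \sum_(f : {ffun 'I_K -> bool}) bern_prod r f * (~~ majority f t)%:R
  <= expR (- (t%:R * (1 - 2 * p) ^+ 2 / 2)).
Proof.
move=> rp p_lt tK; have r01 : 0 <= r <= 1 by case/andP: rp => ? ?; apply/andP; split; lra.
have linv_gt0 : 0 < (2 * (1 - p))^-1 by rewrite invr_gt0; lra.
apply: le_trans (bern_prod_tail (fun f => ~~ majority f t) r01 linv_gt0 tK _) _.
  by move=> f; apply: tilt_minority => //; lra.
(* The moment of the inverse tilt at [r] is the moment of the tilt at [1 - r]. *)
have -> : r * (2 * (1 - p))^-1 + (1 - r) * (2 * (1 - p))^-1^-1
        = (1 - r) * (2 * (1 - p)) + (1 - (1 - r)) * (2 * (1 - p))^-1.
  by rewrite invrK; ring.
by apply/pow_le_expR/tilt_moment_le => //; case/andP: rp => ? ?; apply/andP; split; lra.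
Qed.

End Chernoff.

Definition search_cost (rs : seq (nat * bool)) : nat :=
  foldr (fun r acc => r.1 + (if r.2 then 0 else acc))%N 0%N rs.

Lemma search_cost_le (c : nat) (rs : seq (nat * bool)) :
  all (fun r => r.1 <= c)%N rs -> (search_cost rs <= size rs * c)%N.
Proof.
elim: rs => //= r rs IH /andP[rc /IH]; case: r.2 rc => /=; lia.
Qed.

Lemma search_cost_le_stop (a b : nat) (rs : seq (nat * bool)) :
  all (fun r : nat * bool => r.1 <= a + b * r.2)%N rs -> (search_cost rs <= size rs * a + b)%N.
Proof.
elim: rs => //= r rs IH /andP[rab /IH]; case: r.2 rab => /=; lia.
Qed.

Section Process.
Variables (T0 E K : nat) (t : nat -> nat).

Definition tests_cost : nat := \sum_(i < E) t i.+1.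

Lemma run_tests_cost_le (b : {ffun 'I_E -> {ffun 'I_K -> bool}}) :
  ((run_tests b t).1 <= tests_cost)%N.
Proof.
rewrite /run_tests /tests_cost -big_enum /=.
elim: (enum 'I_E) => [|i l IH]; rewrite ?big_nil ?big_cons //=.
case: ifP => _ /=; lia.
Qed.

Lemma run_tests_pass (b : {ffun 'I_E -> {ffun 'I_K -> bool}}) :
  [forall i, majority (b i) (t i.+1)] -> run_tests b t = (tests_cost, true).
Proof.
move=> /forallP pass; rewrite /run_tests /tests_cost -big_enum /=.
elim: (enum 'I_E) => [|i l IH]; rewrite ?big_nil ?big_cons //=.
by rewrite pass IH.
Qed.

Definition bad_tape (x : tape T0 E K) : bool :=
  majority x.1 T0 && ~~ [forall i, majority (x.2 i) (t i.+1)].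

Lemma run_elem_cost_le (x : tape T0 E K) : ((run_elem x t).1 <= T0 + tests_cost)%N.
Proof.
rewrite /run_elem; case: ifP => _ /=; last exact: leq_addr.
by rewrite leq_add2l run_tests_cost_le.
Qed.

Lemma run_elem_good (x : tape T0 E K) : ~~ bad_tape x ->
  ((run_elem x t).1 <= T0 + tests_cost * (run_elem x t).2)%N.
Proof.
rewrite /bad_tape /run_elem; case: ifP => [_ /negbNE pass|_ _] /=; last exact: leq_addr.
by rewrite run_tests_pass //= muln1.
Qed.

Lemma total_queries_le m (w : Omega m T0 E K) :
  (total_queries t w
   <= m * T0 + tests_cost + m * (T0 + tests_cost) * \sum_j bad_tape (w j))%N.
Proof.
have -> : total_queries t w = search_cost [seq run_elem (w j) t | j <- enum 'I_m].
  by rewrite /search_cost foldr_map.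
set rs := [seq run_elem (w j) t | j <- enum 'I_m].
have sz : size rs = m by rewrite size_map size_enum_ord.
case: (boolP [exists j, bad_tape (w j)]) => [/existsP[j bj] | /existsPn good].
  have cnt : (0 < \sum_j bad_tape (w j))%N by rewrite (bigD1 j) //= bj.
  apply: leq_trans (_ : m * (T0 + tests_cost) <= _)%N; last first.
    by apply: leq_trans (leq_addl _ _); apply: leq_pmulr.
  rewrite -sz; apply: search_cost_le; apply/allP => _ /mapP[i _ ->].
  exact: run_elem_cost_le.
apply: leq_trans (leq_addr _ _); rewrite -sz; apply: search_cost_le_stop.
by apply/allP => _ /mapP[i _ ->]; apply: run_elem_good.
Qed.

End Process.

Arguments bad_tape {T0 E K} t x.

Section BadTapes.
Context {R : realType} {T0 E K : nat} {t : nat -> nat} {r1 r2 : R}.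
Hypotheses (r1_01 : 0 <= r1 <= 1) (r2_01 : 0 <= r2 <= 1).

Lemma bad_tape_prob_le_prelim (p : R) : r1 <= p -> p < 1 / 2 ->
  \sum_(x : tape T0 E K) tape_prob r1 r2 x * (bad_tape t x)%:R
  <= expR (- (T0%:R * (1 - 2 * p) ^+ 2 / 2)).
Proof.
move=> r1p p_lt; apply: le_trans (_ : _ <= \sum_x tape_prob r1 r2 x * (majority x.1 T0)%:R) _.
  apply: ler_sum => x _; apply: ler_wpM2l; first exact: tape_prob_ge0.
  by rewrite ler_nat /bad_tape; case: (majority _ _); case: [forall _, _].
rewrite (sum_tape_prob_prelim r1 r2 T0 E K (fun f => (majority f T0)%:R)).
apply: majority_tail => //.
by case/andP: r1_01 => -> _.
Qed.

Lemma bad_tape_prob_le_tests (p : R) : 1 - p <= r2 -> p < 1 / 2 ->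
  (forall i : 'I_E, t i.+1 <= K)%N ->
  \sum_(x : tape T0 E K) tape_prob r1 r2 x * (bad_tape t x)%:R
  <= \sum_(i < E) expR (- ((t i.+1)%:R * (1 - 2 * p) ^+ 2 / 2)).
Proof.
move=> r2p p_lt tK.
pose fails i (x : tape T0 E K) : R := (~~ majority (x.2 i) (t i.+1))%:R.
apply: le_trans (_ : _ <= \sum_x tape_prob r1 r2 x * \sum_i fails i x) _.
  apply: ler_sum => x _; apply: ler_wpM2l; first exact: tape_prob_ge0.
  case: (boolP (bad_tape t x)) => [/andP[_ /forallPn[i fi]]|_]; last first.
    by apply: sumr_ge0 => i _; apply: ler0n.
  by rewrite (bigD1 i) //= /fails fi lerDl sumr_ge0 // => ? _; apply: ler0n.
under eq_bigr do rewrite big_distrr /=.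
rewrite exchange_big; apply: ler_sum => i _.
rewrite (sum_tape_prob_test r1 r2 T0 E K i (fun f => (~~ majority f (t i.+1))%:R)).
by apply: minority_tail => //; case/andP: r2_01 => _ ->; rewrite andbT.
Qed.

End BadTapes.

Lemma expected_total_le {R : realType} {d} {T : orderType d} {m T0 E K} {t : nat -> nat}
    {s : 'I_m -> T} {q1 q2 : T -> R} :
  (forall j, 0 <= q1 (s j) <= 1) -> (forall j, 0 <= q2 (s j) <= 1) ->
  \sum_(w : Omega m T0 E K) prob s q1 q2 w * (total_queries t w)%:R
  <= (m * T0 + tests_cost E t)%:R + (m * (T0 + tests_cost E t))%:R *
       \sum_j \sum_(x : tape T0 E K) tape_prob (q1 (s j)) (q2 (s j)) x * (bad_tape t x)%:R.
Proof.
move=> q1_01 q2_01; set A := (m * T0 + _)%N; set B := (m * _)%N.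
apply: le_trans (_ : _ <= \sum_(w : Omega m T0 E K)
    prob s q1 q2 w * (A%:R + B%:R * \sum_j (bad_tape t (w j))%:R)) _.
  apply: ler_sum => w _; apply: ler_wpM2l; first exact: prob_ge0.
  by rewrite -natr_sum -natrM -natrD ler_nat total_queries_le.
under eq_bigr do rewrite mulrDr [_ * A%:R]mulrC mulrCA big_distrr /=.
rewrite big_split /= -!big_distrr /= sum_prob mulr1 exchange_big /=.
by rewrite (eq_bigr _ (fun j _ =>
  sum_prob_marginal d T m T0 E K s q1 q2 j (fun x => (bad_tape t x)%:R))).
Qed.

Section Sizes.
Context {R : realType}.
Implicit Types (p : R) (n : nat).

Lemma cq_ge {p} : 0 <= p < 1 / 2 -> 2 <= (cq p)%:R * (1 - 2 * p) ^+ 2.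
Proof.
move=> /andP[p0 p_lt]; have x0 : 0 < (1 - 2 * p) ^+ 2 by apply: exprn_gt0; lra.
have num0 : 0 <= 4 * (1 - p) by lra.
have := ceiln_ge (divr_ge0 num0 (ltW x0)); rewrite -/(cq p) ler_pdivrMr //; lra.
Qed.

Lemma ln_nat_gt0 {n} : (2 <= n)%N -> 0 < ln (n%:R : R).
Proof. by move=> n2; apply: ln_gt0; rewrite ltr1n. Qed.

Lemma exp_tail_le_invn4 p n (t : nat) : 0 <= p < 1 / 2 -> (2 <= n)%N ->
  4 * (cq p)%:R * ln (n%:R : R) <= t%:R ->
  expR (- (t%:R * (1 - 2 * p) ^+ 2 / 2)) <= n%:R ^- 4.
Proof.
move=> p01 n2; have := cq_ge p01; have := ln_nat_gt0 n2.
set c := (cq p)%:R; set L := ln _; set x := (1 - 2 * p) ^+ 2 => L0 cx tL.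
have x0 : 0 <= x by apply: sqr_ge0.
have -> : n%:R ^- 4 = expR (- (4 * L)) :> R.
  by rewrite expRN -[4]/(4%:R) expRM_natl lnK // posrE ltr0n (leq_trans _ n2).
have h1 : 0 <= (t%:R - 4 * c * L) * x by apply: mulr_ge0; lra.
have h2 : 0 <= L * (c * x - 2) by apply: mulr_ge0; lra.
rewrite ler_expR lerN2; lra.
Qed.

Lemma prelim_size_ge p n : (2 <= n)%N ->
  4 * (cq p)%:R * ln (n%:R : R) <= (prelim_size p n)%:R.
Proof.
move=> n2; have := ln_nat_gt0 n2; set L := ln _ => L0.
have := ceiln_ge (ltW L0); have := ler0n R (cq p).
rewrite /prelim_size natrD !natrM -/L; nra.
Qed.

Lemma prelim_size_le p n : (2 <= n)%N ->
  (prelim_size p n)%:R <= 8 * (cq p)%:R * (ln (n%:R : R) + 1) + 1.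
Proof.
move=> n2; have := ln_nat_gt0 n2; set L := ln _ => L0.
have := ceiln_lt (ltW L0); have := ler0n R (cq p).
rewrite /prelim_size natrD !natrM -/L; nra.
Qed.

Lemma test_size_ge p n i : (2 <= n)%N -> (1 <= i)%N ->
  4 * (cq p)%:R * ln (n%:R : R) <= (test_size p n i)%:R.
Proof.
move=> n2 i1; have := ln_nat_gt0 n2; set L := ln _ => L0.
have pow2 : 2 <= 2 ^+ i :> R by rewrite -[X in X <= _]expr1 ler_eXn2l // ltr1n.
set k := ceiln (2 ^+ i * L).
have kL : 2 * L <= k%:R.
  apply: le_trans (ceiln_ge (mulr_ge0 (exprn_ge0 _ (ler0n _ 2)) (ltW L0))).
  by rewrite ler_wpM2r // ltW.
have : 0 <= (cq p)%:R * (k%:R - 2 * L) by apply: mulr_ge0; rewrite ?subr_ge0.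
rewrite /test_size natrD !natrM -/L -/k; lra.
Qed.

Lemma test_size_le p n i : (2 <= n)%N ->
  (test_size p n i)%:R <= 2 * (cq p)%:R * ln (n%:R : R) * 2 ^+ i + (2 * (cq p)%:R + 1).
Proof.
move=> n2; have := ln_nat_gt0 n2; set L := ln _ => L0.
have := @ceiln_lt R (2 ^+ i * L) (mulr_ge0 (exprn_ge0 _ (ler0n _ 2)) (ltW L0)).
have := ler0n R (cq p).
rewrite /test_size natrD !natrM -/L; nra.
Qed.

Lemma leq_test_size p n i j : (2 <= n)%N -> (i <= j)%N ->
  (test_size p n i <= test_size p n j)%N.
Proof.
move=> n2 ij; have := ln_nat_gt0 n2; set L := ln _ => L0.
rewrite /test_size leq_add2r leq_mul2r leq_mul2l -/L; apply/orP; right; apply/orP; right.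
apply: leq_ceiln; first exact: mulr_ge0 (exprn_ge0 _ (ler0n _ 2)) (ltW L0).
by apply: ler_wpM2r; [exact: ltW | rewrite ler_eXn2l // ltr1n].
Qed.

End Sizes.

Lemma sum_exp2S_lt E : (\sum_(i < E) 2 ^ i.+1 < 2 ^ E.+1)%N.
Proof.
elim: E => [|E IH]; first by rewrite big_ord0.
by rewrite big_ord_recr /= !expnS in IH *; lia.
Qed.

Section SampleSize.
Context {R : realType}.
Context {n m : nat}.
Local Notation L := (ln (n%:R : R)).

Lemma mul_m_ln : (2 <= n)%N -> n%:R / log2 (n%:R : R) = m%:R -> m%:R * L = n%:R * ln 2.
Proof.
move=> n2 hm; rewrite -hm /log2; field.
by rewrite !gt_eqF ?(ln_nat_gt0 n2) ?ln_gt0 ?ltr1n.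
Qed.

Lemma m_gt0 : (2 <= n)%N -> n%:R / log2 (n%:R : R) = m%:R -> (0 < m)%N.
Proof.
move=> n2 hm; rewrite -(ltr0n R) -(pmulr_lgt0 _ (ln_nat_gt0 n2)) mul_m_ln //.
by rewrite mulr_gt0 ?ltr0n ?ln_gt0 ?ltr1n // (leq_trans _ n2).
Qed.

Lemma m_le_n : (2 <= n)%N -> n%:R / log2 (n%:R : R) = m%:R -> m%:R <= n%:R :> R.
Proof.
move=> n2 hm; rewrite -(ler_pM2r (ln_nat_gt0 n2)) mul_m_ln //.
by rewrite ler_wpM2l ?ler0n // ler_ln ?posrE ?ler_nat ?ltr0n // (leq_trans _ n2).
Qed.

Lemma exp2_eta_le : (2 <= n)%N -> n%:R / log2 (n%:R : R) = m%:R ->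
  2 ^+ Defs.eta R n <= 4 * m%:R :> R.
Proof.
move=> n2 hm; have m0 : (0 : R) < m%:R by rewrite ltr0n m_gt0.
have ln2 : (0 : R) < ln 2 by rewrite ln_gt0 ?ltr1n.
rewrite /Defs.eta hm /log2; set y := ln m%:R / ln 2.
have y0 : 0 <= y by rewrite divr_ge0 ?ln_ge0 ?ler1n ?m_gt0 // ltW.
have : 2 ^+ ceiln y <= expR ((y + 1) * ln 2).
  rewrite -[X in X ^+ _]lnK ?posrE // -expRM_natl ler_expR.
  by rewrite ler_wpM2r ?ltW ?ceiln_lt.
rewrite mulrDl mul1r /y mulfVK ?gt_eqF // expRD !lnK ?posrE // exprD expr1.
(* Hide the exponent from [lra], which would otherwise try to normalize it. *)
by move: (2 ^+ ceiln y) => z; lra.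
Qed.

Lemma eta_lt_4n : (2 <= n)%N -> n%:R / log2 (n%:R : R) = m%:R ->
  (Defs.eta R n).+1%:R <= 4 * n%:R :> R.
Proof.
move=> n2 hm; apply: le_trans (_ : 2 ^+ Defs.eta R n <= _); last first.
  by apply: le_trans (exp2_eta_le n2 hm) _; rewrite ler_wpM2l ?m_le_n.
by rewrite -natrX ler_nat ltn_expl.
Qed.

End SampleSize.

Section Budget.
Context {R : realType}.
Variable p : R.
Context {n m : nat}.
Local Notation L := (ln (n%:R : R)).
Local Notation c := ((cq p)%:R : R).

Lemma tests_cost_le : (2 <= n)%N -> n%:R / log2 (n%:R : R) = m%:R ->
  (tests_cost (Defs.eta R n) (test_size p n))%:R <= (40 * c + 4) * n%:R.
Proof.
move=> n2 hm; have L0 : 0 < L := ln_nat_gt0 n2; have mL := mul_m_ln n2 hm.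
have ln2 : ln (2 : R) < 2 by apply: ln_sublinear.
have := exp2_eta_le n2 hm; have := eta_lt_4n n2 hm.
set E := Defs.eta R n; clearbody E => EL E4m.
have geom : \sum_(i < E) (2 : R) ^+ i.+1 <= 8 * m%:R.
  have -> : \sum_(i < E) (2 : R) ^+ i.+1 = (\sum_(i < E) 2 ^ i.+1)%N%:R.
    by rewrite natr_sum; apply: eq_bigr => i _; rewrite natrX.
  apply: le_trans (_ : (2 ^ E.+1)%:R <= _); first by rewrite ler_nat ltnW ?sum_exp2S_lt.
  by rewrite natrX exprS; lra.
rewrite /tests_cost natr_sum.
apply: le_trans (_ : _ <= \sum_(i < E) (2 * c * L * 2 ^+ i.+1 + (2 * c + 1))) _.
  by apply: ler_sum => i _; apply: test_size_le.
rewrite big_split /= -mulr_sumr sumr_const card_ord -[X in _ + X]mulr_natl.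
have : 2 * c * L * \sum_(i < E) 2 ^+ i.+1 <= 2 * c * L * (8 * m%:R).
  by rewrite ler_wpM2l // !mulr_ge0 ?ler0n ?(ltW L0).
have : E%:R * (2 * c + 1) <= 4 * n%:R * (2 * c + 1).
  by rewrite ler_wpM2r ?addr_ge0 ?mulr_ge0 ?ler0n //; lra.
have : c * (n%:R * ln 2) <= c * (n%:R * 2) by rewrite ler_wpM2l ?ler_wpM2l ?ler0n // ltW.
have -> : 2 * c * L * (8 * m%:R) = 16 * c * (n%:R * ln 2) by rewrite -mL; ring.
lra.
Qed.

Lemma mul_prelim_size_le : (2 <= n)%N -> n%:R / log2 (n%:R : R) = m%:R ->
  m%:R * (prelim_size p n)%:R <= (24 * c + 1) * n%:R.
Proof.
move=> n2 hm; have mL := mul_m_ln n2 hm; have mn := m_le_n n2 hm.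
have ln2 : ln (2 : R) < 2 by apply: ln_sublinear.
apply: le_trans (_ : m%:R * (8 * c * (L + 1) + 1) <= _).
  by rewrite ler_wpM2l ?ler0n ?prelim_size_le.
have -> : m%:R * (8 * c * (L + 1) + 1) = 8 * c * (n%:R * ln 2) + (8 * c + 1) * m%:R.
  by rewrite -mL; ring.
have : c * (n%:R * ln 2) <= c * (n%:R * 2) by rewrite ler_wpM2l ?ler_wpM2l ?ler0n // ltW.
have : (8 * c + 1) * m%:R <= (8 * c + 1) * n%:R.
  by rewrite ler_wpM2l // addr_ge0 ?mulr_ge0 ?ler0n.
lra.
Qed.

End Budget.

Lemma bad_tape_prob_le {R : realType} {p1 p2 r1 r2 : R} {n} :
  0 <= p1 < 1 / 2 -> 0 <= p2 < 1 / 2 -> (2 <= n)%N ->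
  0 <= r1 <= 1 -> 0 <= r2 <= 1 -> r1 <= p1 \/ 1 - p2 <= r2 ->
  \sum_(x : tape (prelim_size p1 n) (Defs.eta R n) (test_size p2 n (Defs.eta R n)))
     tape_prob r1 r2 x * (bad_tape (test_size p2 n) x)%:R
  <= (Defs.eta R n).+1%:R * n%:R ^- 4.
Proof.
move=> hp1 hp2 n2 r1_01 r2_01 hr; set E := Defs.eta R n.
have n4 : (0 : R) <= n%:R ^- 4 by rewrite invr_ge0 exprn_ge0.
case: hr => [r1p | r2p].
  apply: le_trans (bad_tape_prob_le_prelim r1_01 r2_01 p1 r1p _) _.
    by case/andP: hp1.
  apply: le_trans (exp_tail_le_invn4 _ _ _ hp1 n2 (prelim_size_ge p1 n n2)) _.
  by rewrite ler_peMl // ler1n.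
have tE (i : 'I_E) : (test_size p2 n i.+1 <= test_size p2 n E)%N by apply: leq_test_size.
apply: le_trans (bad_tape_prob_le_tests r1_01 r2_01 p2 r2p _ tE) _.
  by case/andP: hp2.
apply: le_trans (_ : \sum_(i < E) n%:R ^- 4 <= _).
  by apply: ler_sum => i _; apply: exp_tail_le_invn4 => //; apply: test_size_ge.
by rewrite sumr_const card_ord -[X in X <= _]mulr_natl ler_wpM2r // ler_nat.
Qed.

Lemma oracles_separate {R : realType} {d} {T : orderType d} {m} {s : 'I_m -> T}
    {q1 q2 : T -> R} {p1 p2 a b c : R} :
  oracle_ok s q1 p1 a b -> oracle_ok s q2 p2 b c ->
  forall j, q1 (s j) <= p1 \/ 1 - p2 <= q2 (s j).
Proof.
move=> o1 o2 j; have [hl | hl] := boolP (in_lower s b (s j)).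
  by right; case: (o2 j) => _ [/(_ hl)].
by left; case: (o1 j) => _ [_ /(_ hl)].
Qed.

(* The cost of a run without bad elements, plus the worst-case cost times the union
   bound on the probability that some element is bad. *)
Definition query_bound {R : realType} (p1 p2 : R) (n m : nat) : R :=
  let T0 := prelim_size p1 n in let E := Defs.eta R n in
  let SS := tests_cost E (test_size p2 n) in
  (m * T0 + SS)%:R + (m * (T0 + SS))%:R * (m%:R * (E.+1%:R * n%:R ^- 4)).

Lemma expected_queries_le {R : realType} {p1 p2 : R} {n d} {T : orderType d} {m}
    {s : 'I_m -> T} {q1 q2 : T -> R} :
  0 <= p1 < 1 / 2 -> 0 <= p2 < 1 / 2 -> (2 <= n)%N ->
  (forall j, 0 <= q1 (s j) <= 1) -> (forall j, 0 <= q2 (s j) <= 1) ->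
  (forall j, q1 (s j) <= p1 \/ 1 - p2 <= q2 (s j)) ->
  expected_queries p1 p2 n s q1 q2 <= query_bound p1 p2 n m.
Proof.
move=> hp1 hp2 n2 q1_01 q2_01 sep.
apply: le_trans (expected_total_le q1_01 q2_01) _.
rewrite /query_bound /= lerD2l ler_wpM2l ?ler0n //.
apply: le_trans (_ : _ <= \sum_(j < m) (Defs.eta R n).+1%:R * n%:R ^- 4) _.
  by apply: ler_sum => j _; apply: bad_tape_prob_le.
by rewrite sumr_const card_ord -[X in X <= _]mulr_natl.
Qed.

Definition query_constant {R : realType} (p1 p2 : R) : R :=
  24 * (cq p1)%:R + 40 * (cq p2)%:R + 5.

Lemma query_budget_le {R : realType} (p1 p2 : R) n m :
  (2 <= n)%N -> n%:R / log2 (n%:R : R) = m%:R ->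
  query_bound p1 p2 n m <= 5 * query_constant p1 p2 * n%:R.
Proof.
move=> n2 hm; rewrite /query_bound.
have := eta_lt_4n n2 hm; have := mul_prelim_size_le p1 n2 hm; have := tests_cost_le p2 n2 hm.
set E := Defs.eta R n; set T0 := prelim_size p1 n; set SS := tests_cost E _.
clearbody E T0 SS => SS_le T0_le E_le.
set K := query_constant p1 p2.
have K0 : 0 <= K by rewrite !addr_ge0 ?mulr_ge0 ?ler0n.
have mn := m_le_n n2 hm; have n1 : (1 : R) <= n%:R by rewrite ler1n ltnW.
have n4 : (0 : R) <= n%:R ^- 4 by rewrite invr_ge0 exprn_ge0.
have A_le : (m * T0 + SS)%:R <= K * n%:R by rewrite natrD natrM /K /query_constant; lra.
have B_le : (m * (T0 + SS))%:R <= n%:R * (K * n%:R).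
  rewrite natrM ler_pM ?ler0n //; apply: le_trans A_le.
  by rewrite ler_nat leq_add2r leq_pmull ?(m_gt0 n2 hm).
have S_le : m%:R * (E.+1%:R * n%:R ^- 4) <= n%:R * (4 * n%:R * n%:R ^- 4) :> R.
  by rewrite ler_pM ?mulr_ge0 ?ler0n ?ler_wpM2r.
apply: le_trans (lerD A_le (ler_pM (ler0n _ _) _ B_le S_le)) _.
  by apply: mulr_ge0; [exact: ler0n | exact: mulr_ge0].
have -> : n%:R * (K * n%:R) * (n%:R * (4 * n%:R * n%:R ^- 4))
        = 4 * K * (n%:R ^+ 4 / n%:R ^+ 4) by ring.
rewrite mulfV ?expf_neq0 ?gt_eqF ?ltr0n // 1?(leq_trans _ n2) //.
have : K <= K * n%:R by rewrite ler_peMr.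
lra.
Qed.

Theorem lemma17 (R : realType) (p1 p2 : R) :
  0 <= p1 < 1 / 2 -> 0 <= p2 < 1 / 2 ->
  exists C : R,
    forall (n m : nat) (d : Order.disp_t) (T : orderType d)
           (s : 'I_m -> T) (q1 q2 : T -> R),
      (2 <= n)%N ->
      (n%:R / log2 (n%:R : R) = m%:R) ->
      injective s ->
      oracle_ok s q1 p1 (1 / 6) (1 / 3) ->
      oracle_ok s q2 p2 (1 / 3) (3 / 4) ->
      expected_queries p1 p2 n s q1 q2 <= C * n%:R.
Proof.
move=> hp1 hp2; exists (5 * query_constant p1 p2) => n m d T s q1 q2 n2 hm _ o1 o2.
have q1_01 j : 0 <= q1 (s j) <= 1 by case: (o1 j).
have q2_01 j : 0 <= q2 (s j) <= 1 by case: (o2 j).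
apply: le_trans (expected_queries_le hp1 hp2 n2 q1_01 q2_01 (oracles_separate o1 o2)) _.
exact: query_budget_le.
Qed.
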